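(* The set of $G\in\mathcal{T}$ such that the group $(\mathbb{N},G)$ is isomorphic to $(\mathbb{Q},+)$ is comeager in $\mathcal{T}$.
   Context: Let $\mathbb{N}^{\mathbb{N}\times\mathbb{N}}$ be the space of functions $\mathbb{N}\times\mathbb{N}\to\mathbb{N}$ with the product of discrete topologies (a Polish space). Let $\mathcal{A}=\{G\in\mathbb{N}^{\mathbb{N}\times\mathbb{N}}: G \text{ is an abelian group operation on } \mathbb{N} \text{ with identity element } 0\}$ and $\mathcal{T}=\{G\in\mathcal{A}: (\mathbb{N},G)\text{ is torsion-free}\}$, with the subspace topology; $\mathcal{T}$ is a Polish space (the space of countably infinite torsion-free abelian groups). Comeager means: complement is a countable union of nowhere dense sets. *)

From mathcomp Require Import all_boot all_order all_algebra.
Set Implicit Arguments. Unset Strict Implicit. Unset Printing Implicit Defensive.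
Import GRing.Theory.

(* The Polish space N^(N x N): points are binary operations on nat. *)
Definition Op := nat * nat -> nat.

(* Open sets of the product of discrete topologies: U is open iff every
   point of U has a basic (cylinder) neighbourhood, determined by finitely
   many coordinates, contained in U. *)
Definition is_open (U : Op -> Prop) : Prop :=
  forall f, U f -> exists F : seq (nat * nat),
    forall g, (forall i, i \in F -> g i = f i) -> U g.

Definition is_abelian_group_op (G : Op) : Prop :=
  [/\ (forall a b c, G (G (a, b), c) = G (a, G (b, c))),
      (forall a b, G (a, b) = G (b, a)),
      (forall a, G (0, a) = a) &
      (forall a, exists b, G (a, b) = 0)].

Fixpoint gmul (G : Op) (n : nat) (x : nat) : nat :=
  match n with
  | 0 => 0
  | k.+1 => G (x, gmul G k x)
  end.

Definition torsion_free (G : Op) : Prop :=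
  forall x n, x <> 0 -> 0 < n -> gmul G n x <> 0.

Definition in_T (G : Op) : Prop := is_abelian_group_op G /\ torsion_free G.

Definition rel_closure (X S : Op -> Prop) (x : Op) : Prop :=
  X x /\ forall U, is_open U -> U x -> exists y, [/\ U y, X y & S y].

Definition rel_interior (X A : Op -> Prop) (x : Op) : Prop :=
  X x /\ exists U, [/\ is_open U, U x & forall y, U y -> X y -> A y].

Definition nowhere_dense_in (X S : Op -> Prop) : Prop :=
  forall x, ~ rel_interior X (rel_closure X S) x.

Definition comeager_in (X P : Op -> Prop) : Prop :=
  exists N : nat -> (Op -> Prop),
    (forall n, nowhere_dense_in X (fun y => X y /\ N n y)) /\
    (forall G, X G -> ~ P G -> exists n, N n G).

Definition iso_to_Q (G : Op) : Prop :=
  exists phi : nat -> rat, bijective phi /\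
    forall a b, phi (G (a, b)) = (phi a + phi b)%R.

From HB Require Import structures.
From mathcomp Require Import all_boot all_order all_algebra.
From mathcomp Require classical_sets cardinality.
From Stdlib Require Import Classical.
Set Implicit Arguments. Unset Strict Implicit. Unset Printing Implicit Defensive.
Import GRing.Theory Num.Theory.

(* A point G of T fails to be isomorphic to Q iff (nat, G) is not divisible
   (some x has no n-th part) or has rank > 1 (some x is independent of 1),
   since a divisible torsion-free group of rank one is Q.  These countably
   many "bad" conditions each define a nowhere dense set.  The key fact is
   that copies of Q are dense in T: a basic open set prescribes finitely many
   values of G, i.e. finitely many relations c = a + b among finitely many
   elements of a torsion-free group, and such a finite configuration always
   has an injective rational valuation respecting the relations (linear
   algebra over Q plus torsion-freeness).  Extending it to a bijection
   nat -> Q and transporting the addition of Q yields a nearby copy of Q, and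
   being divisible / of rank one is witnessed by finitely many values of the
   operation, so each copy of Q has a neighbourhood avoiding a given bad set. *)

Record tfgroup := TFGroup { op : Op; opP : in_T op }.

Definition carrier (g : tfgroup) : Type := nat.
HB.instance Definition _ (g : tfgroup) := Choice.copy (carrier g) nat.

Section Packing.
Variable g : tfgroup.

Lemma tfgroup_has_inverse (a : carrier g) : exists b : nat, op g (a, b) == 0%N.
Proof.
by case: (opP g) => [[_ _ _ inv] _]; have [b hb] := inv a; exists b; apply/eqP.
Qed.

Definition tfneg (a : carrier g) : carrier g := xchoose (tfgroup_has_inverse a).
Definition tfadd (a b : carrier g) : carrier g := op g (a, b).
Definition tfzero : carrier g := 0%N.

Lemma tfaddA : associative tfadd.
Proof. by case: (opP g) => [[assoc _ _ _] _] a b c; rewrite /tfadd assoc. Qed.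

Lemma tfaddC : commutative tfadd.
Proof. by case: (opP g) => [[_ comm _ _] _] a b; rewrite /tfadd comm. Qed.

Lemma tfadd0 : left_id tfzero tfadd.
Proof. by case: (opP g) => [[_ _ id0 _] _] a; rewrite /tfadd id0. Qed.

Lemma tfaddN : left_inverse tfzero tfneg tfadd.
Proof. by move=> a; rewrite tfaddC; apply/eqP/(xchooseP (tfgroup_has_inverse a)). Qed.
End Packing.

HB.instance Definition _ (g : tfgroup) :=
  GRing.isZmodule.Build (carrier g) (@tfaddA g) (@tfaddC g) (@tfadd0 g) (@tfaddN g).

Local Open Scope ring_scope.

Definition ztorsion_free (V : zmodType) : Prop :=
  forall (x : V) n, (0 < n)%N -> x *+ n = 0 -> x = 0.

Lemma gmulE (g : tfgroup) n (x : carrier g) : gmul (op g) n x = x *+ n.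
Proof. by elim: n => [|n IHn] //=; rewrite mulrS IHn. Qed.

Lemma carrier_torsion_free (g : tfgroup) : ztorsion_free (carrier g).
Proof.
move=> x n n_gt0 nx0; case: (opP g) => _ tf; apply: NNPP => x_neq0.
by apply: (tf x n) => //; rewrite gmulE nx0.
Qed.

Lemma tf_intmul (V : zmodType) (x : V) (z : int) :
  ztorsion_free V -> x != 0 -> x *~ z = 0 -> z = 0.
Proof.
move=> tfV x_neq0; case: (intP z) => [|n|n] // zx0; case/eqP: x_neq0.
  by apply: (tfV _ n.+1) => //; rewrite pmulrn.
by apply: (tfV _ n.+1) => //; apply/eqP; rewrite pmulrn -oppr_eq0 -mulrNz zx0.
Qed.

(* A nonzero polynomial over a numeric domain has a non-root: among the
   size p distinct numbers 0, 1, ..., (size p).-1 some is not a root. *)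
Lemma exists_nonroot (R : numDomainType) (p : {poly R}) :
  p != 0 -> exists t : R, ~~ root p t.
Proof.
move=> p_neq0; set rs := [seq (i%:R : R) | i <- iota 0 (size p)].
have [all_roots|/allPn [t _ nroot]] := boolP (all (root p) rs); last by exists t.
have uniq_rs : uniq rs.
  by rewrite map_inj_uniq ?iota_uniq // => i j /eqP; rewrite eqr_nat => /eqP.
by have := max_poly_roots p_neq0 all_roots uniq_rs; rewrite size_map size_iota ltnn.
Qed.

(* Finitely many nonzero row vectors can be simultaneously kept away from 0
   by one column vector: take c = (t^i)_i for a common non-root t of the
   polynomials with coefficients w. *)
Lemma avoiding_vector (R : numDomainType) m (s : seq 'rV[R]_m) :
  all (fun w => w != 0) s -> exists c : 'cV[R]_m, forall w, w \in s -> w *m c != 0.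
Proof.
move=> s_neq0.
pose pw (w : 'rV[R]_m) := \poly_(i < m) oapp (fun j => w 0 j) 0 (insub i).
have pw_neq0 w : w != 0 -> pw w != 0.
  apply: contraNneq => pw0; apply/eqP/rowP => i; rewrite mxE.
  have := congr1 (fun q : {poly R} => q`_i) pw0.
  by rewrite coef_poly ltn_ord coef0 valK.
have prod_neq0 : \prod_(w <- s) pw w != 0.
  by rewrite prodf_seq_neq0; apply/allP => w ws; apply/pw_neq0/(allP s_neq0).
have [t t_nroot] := exists_nonroot prod_neq0.
exists (\col_(i < m) t ^+ i) => w ws.
have pwt_neq0 : (pw w).[t] != 0.
  by move: t_nroot; rewrite /root horner_prod prodf_seq_neq0 => /allP; apply.
apply: contraNneq pwt_neq0 => wc0.
suff <- : (w *m \col_(i < m) t ^+ i) 0 0 = (pw w).[t] by rewrite wc0 mxE.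
by rewrite horner_poly mxE; apply: eq_bigr => i _; rewrite mxE valK.
Qed.

Lemma clear_denominators k (u : 'rV[rat]_k) :
  exists N : nat, exists z : 'I_k -> int,
    (0 < N)%N /\ forall l, (z l)%:~R = u 0 l * N%:R.
Proof.
pose D (l : 'I_k) := absz (denq (u 0 l)).
exists (\prod_(l < k) D l), (fun l => numq (u 0 l) * (\prod_(j < k | j != l) D j)%:Z).
split; first by apply: prodn_gt0 => l; rewrite absz_gt0 denq_neq0.
move=> l; rewrite [in RHS](bigD1 l) //= natrM intrM.
have -> : (D l)%:R = (denq (u 0 l))%:~R :> rat.
  by rewrite /D natr_absz ger0_norm // ltW // denq_gt0.
by rewrite -{2}[u 0 l]divq_num_den mulrA mulfVK // intr_eq0 denq_neq0.
Qed.

(* Integer combinations of the elements of A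
   are indexed by 'I_(size A); the relations span a subspace of Q^A, and any
   rational vector killed by that subspace but separating coordinates does
   the job. *)
Section LocalRationality.
Variable V : zmodType.
Hypothesis tfV : ztorsion_free V.
Variable A : seq V.
Hypothesis uniqA : uniq A.
Local Notation m := (size A).

Definition combo (w : 'I_m -> int) : V := \sum_(i < m) nth 0 A i *~ w i.

Definition indicator (x : V) (i : 'I_m) : int := ((nth 0 A i == x) : nat)%:Z.

Lemma sum_select (M : zmodType) (h : 'I_m -> M) x (x_idx : (index x A < m)%N) :
  \sum_(i < m) (if nth 0 A i == x then h i else 0) = h (Ordinal x_idx).
Proof.
rewrite (bigD1 (Ordinal x_idx)) //= nth_index -?index_mem // eqxx.
rewrite big1 ?addr0 // => i i_neq; case: ifP => // /eqP Ai.
by case/eqP: i_neq; apply/val_inj; rewrite /= -Ai index_uniq.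
Qed.

Lemma combo_indicator x : x \in A -> combo (indicator x) = x.
Proof.
move=> xA; have x_idx : (index x A < m)%N by rewrite index_mem.
rewrite -[RHS](nth_index 0 xA) -(sum_select (fun i => nth 0 A i) x_idx).
by rewrite /combo /indicator; apply: eq_bigr => i _; case: eqP.
Qed.

Lemma combo_delta (i : 'I_m) (N : int) :
  combo (fun j => ((j == i) : nat)%:Z * N) = nth 0 A i *~ N.
Proof.
rewrite /combo (bigD1 i) //= eqxx mul1r big1 ?addr0 // => j /negPf ->.
by rewrite mul0r mulr0z.
Qed.

Definition relvec (t : (V * V) * V) (i : 'I_m) : int :=
  indicator t.2 i - indicator t.1.1 i - indicator t.1.2 i.

Lemma combo_relvec t : t.1.1 \in A -> t.1.2 \in A -> t.2 \in A ->
  t.2 = t.1.1 + t.1.2 -> combo (relvec t) = 0.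
Proof.
move=> Aa Ab Ac rel; rewrite /combo /relvec.
under eq_bigr => i _ do rewrite !mulrzBr.
rewrite !sumrB -!/(combo (indicator _)) !combo_indicator // rel.
by rewrite [t.1.1 + _]addrC addrK subrr.
Qed.

Variable rels : seq ((V * V) * V).
Hypothesis relsP : forall t, t \in rels ->
  [/\ t.1.1 \in A, t.1.2 \in A, t.2 \in A & t.2 = t.1.1 + t.1.2].
Local Notation k := (size rels).
Let t0 : (V * V) * V := ((0, 0), 0).

Definition relmx : 'M[rat]_(k, m) := \matrix_(l, i) (relvec (nth t0 rels l) i)%:~R.

Lemma combo_relations (z : 'I_k -> int) :
  combo (fun i => \sum_l z l * relvec (nth t0 rels l) i) = 0.
Proof.
rewrite /combo; under eq_bigr => i _ do rewrite mulrz_sumr.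
rewrite exchange_big /=; apply: big1 => l _.
under eq_bigr => i _ do rewrite mulrC mulrzA.
have [Aa Ab Ac rel] := relsP (mem_nth t0 (ltn_ord l)).
by rewrite -mulrz_suml -/(combo _) combo_relvec // mul0rz.
Qed.

(* Torsion-freeness: no difference of two distinct coordinate vectors lies in
   the rational span of the relations. *)
Lemma diff_notin_relations (i j : 'I_m) :
  i != j -> ~~ ((delta_mx 0 i - delta_mx 0 j : 'rV[rat]_m) <= relmx)%MS.
Proof.
move=> ij; apply/negP => /submxP [u def_diff].
have [N [z [N_gt0 def_z]]] := clear_denominators u.
have int_rel i' : (((i' == i) : nat)%:Z - ((i' == j) : nat)%:Z) * N%:Z
                  = \sum_l z l * relvec (nth t0 rels l) i'.
  apply: (intr_inj (R := rat)).
  have := congr1 (fun M : 'rV[rat]_m => M 0 i') def_diff.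
  rewrite !mxE !eqxx /= => diff_i'.
  rewrite intrM rmorphB /= diff_i' mulr_suml rmorph_sum; apply: eq_bigr => l _.
  by rewrite mxE rmorphM /= def_z mulrAC.
have : (nth 0 A i - nth 0 A j) *+ N = 0.
  rewrite pmulrn -[RHS](combo_relations z) /combo.
  under [RHS]eq_bigr => i' _ do rewrite -int_rel mulrBl mulrzBr.
  by rewrite sumrB mulrzBl -!combo_delta.
move/(tfV N_gt0)/eqP; rewrite subr_eq0 nth_uniq //; exact/negP.
Qed.

Lemma separating_solution :
  exists v : 'cV[rat]_m, relmx *m v = 0 /\ injective (fun i => v i 0).
Proof.
pose C := cokermx relmx.
pose diff (p : 'I_m * 'I_m) : 'rV[rat]_m := (delta_mx 0 p.1 - delta_mx 0 p.2) *m C.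
pose S := [seq diff p | p <- enum {: 'I_m * 'I_m} & p.1 != p.2].
have [c c_avoids] : exists c : 'cV[rat]_m, forall w, w \in S -> w *m c != 0.
  apply: avoiding_vector; apply/allP => w /mapP [[i j]].
  rewrite mem_filter /= => /andP [ij _] ->.
  by have := diff_notin_relations ij; rewrite submxE.
pose v := C *m c.
have v_sol : relmx *m v = 0 by rewrite mulmxA mulmx_coker mul0mx.
have diff_v i j : diff (i, j) *m c = row i v - row j v.
  by rewrite /diff -mulmxA mulmxBl -!rowE.
clearbody v; exists v; split => // i j vij.
case: (eqVneq i j) => // ij.
have ij_in : diff (i, j) \in S.
  by apply/mapP; exists (i, j); rewrite // mem_filter ij mem_enum.
have /eqP[] := c_avoids _ ij_in.
by rewrite diff_v; apply/rowP => z; rewrite !mxE !ord1 vij subrr.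
Qed.

Theorem local_rational_valuation :
  exists vf : V -> rat, {in A &, injective vf} /\
    forall t, t \in rels -> vf t.2 = vf t.1.1 + vf t.1.2.
Proof.
have [v [v_sol v_inj]] := separating_solution.
pose vf (x : V) := \sum_(i < m) (if nth 0 A i == x then v i 0 else 0).
have vfE x (x_idx : (index x A < m)%N) : vf x = v (Ordinal x_idx) 0.
  exact: sum_select.
have vf_ind x : \sum_(i < m) (indicator x i)%:~R * v i 0 = vf x.
  by apply: eq_bigr => i _; rewrite /indicator; case: eqP; rewrite ?mul1r ?mul0r.
exists vf; split.
  move=> x y xA yA; have x_idx : (index x A < m)%N by rewrite index_mem.
  have y_idx : (index y A < m)%N by rewrite index_mem.
  rewrite (vfE x x_idx) (vfE y y_idx) => /v_inj /(congr1 val) /= idx_eq.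
  by rewrite -(nth_index 0 xA) -(nth_index 0 yA) idx_eq.
move=> t t_rel; have l_idx : (index t rels < k)%N by rewrite index_mem.
have := congr1 (fun M : 'cV[rat]_k => M (Ordinal l_idx) 0) v_sol.
rewrite !mxE; under eq_bigr => i _ do rewrite mxE /= nth_index //.
under eq_bigr => i _ do rewrite /relvec !rmorphB /= !mulrBl.
rewrite !sumrB !vf_ind => /eqP; rewrite subr_eq0 subr_eq => /eqP ->.
by rewrite addrC.
Qed.
End LocalRationality.

(* A divisible torsion-free Z-module of rank one is isomorphic to Q: fixing
   e != 0, every x satisfies a x = b e for some a > 0, and x |-> b / a is a
   well-defined additive bijection. *)
Section RankOneDivisible.
Variable V : zmodType.
Hypothesis tfV : ztorsion_free V.
Variable e : V.
Hypothesis e_neq0 : e != 0.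
Hypothesis divisible : forall (x : V) n, (0 < n)%N -> exists y : V, y *+ n = x.
Hypothesis rank_one : forall x : V, exists a, exists b : int, (0 < a)%N /\ x *+ a = e *~ b.

Lemma exists_fraction (x : V) :
  exists ab : nat * int, (0 < ab.1)%N && (x *+ ab.1 == e *~ ab.2).
Proof. by have [a [b [a_gt0 xab]]] := rank_one x; exists (a, b); rewrite a_gt0 xab /=. Qed.

Definition ratio (x : V) : rat :=
  let ab := xchoose (exists_fraction x) in ab.2%:~R / ab.1%:R.

Lemma fraction_unique (x : V) a b a' b' :
  x *+ a = e *~ b -> x *+ a' = e *~ b' -> b * a'%:Z = b' * a%:Z.
Proof.
move=> xab xab'; apply/eqP; rewrite -subr_eq0; apply/eqP; apply: (tf_intmul tfV e_neq0).
by rewrite mulrzBr !mulrzA -xab -xab' -!pmulrn -!mulrnA mulnC subrr.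
Qed.

Lemma ratioE (x : V) a b : (0 < a)%N -> x *+ a = e *~ b -> ratio x = b%:~R / a%:R.
Proof.
move=> a_gt0 xab; rewrite /ratio; case/andP: (xchooseP (exists_fraction x)).
move: (xchoose _) => [a' b'] /= a'_gt0 /eqP xab'.
apply/eqP; rewrite eqr_div ?pnatr_eq0 -?lt0n //.
rewrite -[a%:R]/(a%:Z%:~R : rat) -[a'%:R]/(a'%:Z%:~R : rat) -!intrM.
by rewrite (fraction_unique xab xab').
Qed.

Lemma ratioD : {morph ratio : x y / x + y}.
Proof.
move=> x y; case/andP: (xchooseP (exists_fraction x)); rewrite -/(ratio x).
move: (xchoose _) => [a b] /= a_gt0 /eqP xab.
case/andP: (xchooseP (exists_fraction y)); move: (xchoose _) => [a' b'] /= a'_gt0 /eqP yab.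
have xyab : (x + y) *+ (a * a') = e *~ (b * a'%:Z + b' * a%:Z).
  by rewrite mulrnDl mulrnA xab [in y *+ _]mulnC mulrnA yab mulrzDr !mulrzA !pmulrn.
rewrite (ratioE _ xyab) ?muln_gt0 ?a_gt0 // (ratioE a_gt0 xab) (ratioE a'_gt0 yab).
rewrite addf_div ?pnatr_eq0 -?lt0n // intrD !intrM natrM.
by rewrite -[a%:R]/(a%:Z%:~R : rat) -[a'%:R]/(a'%:Z%:~R : rat).
Qed.

Lemma ratio_inj : injective ratio.
Proof.
move=> x y rxy; apply/eqP; rewrite -subr_eq0; apply/eqP.
have rdiff0 : ratio (x - y) = 0 by apply: (addIr (ratio y)); rewrite -ratioD subrK rxy add0r.
case/andP: (xchooseP (exists_fraction (x - y))); move: (xchoose _) => [a b] /= a_gt0 /eqP dab.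
move: rdiff0; rewrite (ratioE a_gt0 dab) => /eqP; rewrite mulf_eq0 invr_eq0 pnatr_eq0.
rewrite intr_eq0 eqn0Ngt a_gt0 orbF => /eqP b0.
by apply: (tfV a_gt0); rewrite dab b0.
Qed.

Lemma ratio_surj (q : rat) : exists x : V, ratio x == q.
Proof.
have d_gt0 : (0 < absz (denq q))%N by rewrite absz_gt0 denq_neq0.
have [y yd] := divisible (e *~ numq q) d_gt0.
exists y; rewrite (ratioE d_gt0 yd) natr_absz ger0_norm ?ltW ?denq_gt0 //.
by rewrite divq_num_den.
Qed.

Theorem rank_one_divisible_iso :
  exists phi : V -> rat, bijective phi /\ {morph phi : x y / x + y}.
Proof.
exists ratio; split; last exact: ratioD.
exists (fun q => xchoose (ratio_surj q)) => [x|q]; last exact/eqP/(xchooseP (ratio_surj q)).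
by apply: ratio_inj; apply/eqP/(xchooseP (ratio_surj (ratio x))).
Qed.
End RankOneDivisible.

Section Countability.
Import classical_sets cardinality.

Lemma nat_rat_bijection : exists f : nat -> rat, bijective f.
Proof.
have /card_esym /card_set_bijP [f [_ f_inj f_surj]] := card_rat.
have f_onto (q : rat) : exists n, f n == q.
  by have [n _ <-] := f_surj q I; exists n.
exists f, (fun q => xchoose (f_onto q)) => [n|q]; last exact/eqP/(xchooseP (f_onto q)).
by apply: f_inj; rewrite ?in_setT //; apply/eqP/(xchooseP (f_onto (f n))).
Qed.
End Countability.

Definition swap (U : eqType) (p q r : U) : U :=
  if r == p then q else if r == q then p else r.

Lemma swapK (U : eqType) (p q : U) : involutive (swap p q).
Proof.
move=> r; rewrite /swap; have [-> | r_neq_p] := eqVneq r p.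
  by rewrite eqxx; case: eqP.
have [-> | r_neq_q] := eqVneq r q; first by rewrite eqxx.
by rewrite (negPf r_neq_p) (negPf r_neq_q).
Qed.

(* If T and U are in bijection, every injection from a finite subset of T
   to U extends to a bijection: correct a given bijection point by point by
   composing with transpositions. *)
Lemma extend_to_bijection (T U : eqType) (L : seq T) (f : T -> U) :
  (exists b : T -> U, bijective b) -> {in L &, injective f} ->
  exists psi : T -> U, bijective psi /\ {in L, psi =1 f}.
Proof.
move=> [b b_bij]; elim: L => [|x L IHL] f_inj; first by exists b.
have [|psi [psi_bij psi_f]] := IHL.
  by move=> y z yL zL; apply: f_inj; rewrite inE ?yL ?zL orbT.
exists (swap (psi x) (f x) \o psi); split.
  by apply: bij_comp => //; apply: inv_bij (swapK _ _).
move=> y; rewrite inE => /orP [/eqP -> | yL] /=; first by rewrite /swap eqxx.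
have [-> | y_neq_x] := eqVneq y x; first by rewrite /swap eqxx.
rewrite /swap psi_f //.
have -> : (f y == psi x) = false.
  by apply/negP => /eqP; rewrite -psi_f // => /(bij_inj psi_bij) /eqP; apply/negP.
have -> // : (f y == f x) = false.
by apply/negP => /eqP /f_inj; rewrite !inE eqxx yL orbT => /(_ isT isT) /eqP; apply/negP.
Qed.

Section RationalStructures.
Variables (G : Op) (phi : nat -> rat).
Hypothesis phiD : forall a b, phi (G (a, b)) = phi a + phi b.

Lemma hom_zero : G (0%N, 0%N) = 0%N -> phi 0%N = 0.
Proof. by move=> G00; apply: (@addIr _ (phi 0%N)); rewrite -phiD G00 add0r. Qed.

Hypothesis phi0 : phi 0%N = 0.

Lemma hom_gmul n x : phi (gmul G n x) = phi x *+ n.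
Proof. by elim: n => [|n IHn] //=; rewrite phiD IHn mulrS. Qed.

Hypothesis phi_bij : bijective phi.

Lemma rational_divisible x n : (0 < n)%N -> exists y, gmul G n y = x.
Proof.
case: phi_bij => psi phiK psiK n_gt0; exists (psi (phi x / n%:R)).
apply: (can_inj phiK); rewrite hom_gmul psiK -[LHS]mulr_natr mulfVK //.
by rewrite pnatr_eq0 -lt0n.
Qed.

Lemma rational_rank_one x : exists a b, (0 < a)%N /\
  (gmul G a x = gmul G b 1%N \/ G (gmul G a x, gmul G b 1%N) = 0%N).
Proof.
have phi_inj : injective phi := bij_inj phi_bij.
have phi1_neq0 : phi 1%N != 0 by apply/eqP; rewrite -phi0 => /phi_inj.
pose q := phi x / phi 1%N.
have phi_x : phi x = (numq q)%:~R / (denq q)%:~R * phi 1%N.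
  by rewrite divq_num_den /q mulfVK.
have d_gt0 : (0 < absz (denq q))%N by rewrite absz_gt0 denq_neq0.
have natr_d : ((absz (denq q))%:R : rat) = (denq q)%:~R.
  by rewrite natr_absz ger0_norm ?ltW ?denq_gt0.
have d_neq0 : ((denq q)%:~R : rat) != 0 by rewrite intr_eq0 denq_neq0.
exists (absz (denq q)), (absz (numq q)); split => //.
have [num_ge0 | num_lt0] := lerP 0 (numq q); [left | right]; apply: phi_inj;
  rewrite ?phiD !hom_gmul -[phi x *+ _]mulr_natr -[phi 1%N *+ _]mulr_natr natr_d phi_x natr_absz.
  by rewrite ger0_norm // mulrAC mulfVK // mulrC.
by rewrite ltr0_norm // mulrAC mulfVK // phi0 rmorphN mulrN mulrC subrr.
Qed.
End RationalStructures.

Lemma transport_structure (psi : nat -> rat) : bijective psi -> psi 0%N = 0 ->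
  exists G : Op, in_T G /\ forall a b, psi (G (a, b)) = psi a + psi b.
Proof.
case=> psi_inv psiK psi_invK psi0.
pose G : Op := fun p => psi_inv (psi p.1 + psi p.2).
have psiD a b : psi (G (a, b)) = psi a + psi b by rewrite psi_invK.
have psi_inj : injective psi := can_inj psiK.
exists G; split => //; split; [split|].
- by move=> a b c; apply: psi_inj; rewrite !psiD addrA.
- by move=> a b; apply: psi_inj; rewrite !psiD addrC.
- by move=> a; apply: psi_inj; rewrite psiD psi0 add0r.
- by move=> a; exists (psi_inv (- psi a)); apply: psi_inj; rewrite psiD psi_invK psi0 subrr.
- move=> x n x_neq0 n_gt0 /(congr1 psi); rewrite (hom_gmul psiD psi0) psi0 => /eqP.
  rewrite mulrn_eq0 eqn0Ngt n_gt0 /= -psi0 => /eqP /psi_inj; exact: x_neq0.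
Qed.

(* The finitely many values of G prescribed by the neighbourhood are
   relations among finitely many elements of the torsion-free group (nat, G);
   a rational valuation of them, extended to a bijection nat -> Q,
   transports the structure of Q to a group agreeing with G there. *)
Lemma rational_structures_dense (G : Op) (F : seq (nat * nat)) : in_T G ->
  exists G' : Op, [/\ in_T G', iso_to_Q G' & {in F, G' =1 G}].
Proof.
move=> TG; pose g := TFGroup TG.
pose F' := (0%N, 0%N) :: F.
pose A : seq (carrier g) := undup (flatten [seq [:: p.1; p.2; G p] | p <- F']).
pose rels : seq ((carrier g * carrier g) * carrier g) := [seq ((p.1, p.2), G p) | p <- F'].
have inA p : p \in F' -> [/\ p.1 \in A, p.2 \in A & G p \in A].
  move=> pF'; rewrite !mem_undup; split; apply/flattenP;
    by exists [:: p.1; p.2; G p]; rewrite ?inE ?eqxx ?orbT //; exact: (map_f _ pF').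
have relsP t : t \in rels -> [/\ t.1.1 \in A, t.1.2 \in A, t.2 \in A & t.2 = t.1.1 + t.1.2].
  by case/mapP => [[a b] pF' ->]; have [] := inA _ pF'.
have [vf [vf_inj vfD]] :=
  local_rational_valuation (@carrier_torsion_free g) (undup_uniq _) relsP.
have [psi [psi_bij psi_vf]] := extend_to_bijection nat_rat_bijection vf_inj.
have psiD p : p \in F' -> psi (G p) = psi p.1 + psi p.2.
  move=> pF'; have [Ap1 Ap2 AGp] := inA p pF'.
  by rewrite !psi_vf //; apply: (vfD ((p.1, p.2), G p)); apply: map_f.
have psi0 : psi 0%N = 0.
  have G00 : G (0%N, 0%N) = 0%N by have [[_ _ id0 _] _] := TG.
  have := psiD _ (mem_head (0%N, 0%N) F); rewrite G00 /= => /esym/eqP.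
  by rewrite -subr_eq0 addrK => /eqP.
have [G' [TG' psiD']] := transport_structure psi_bij psi0.
exists G'; split => //; first by exists psi.
case=> a b pF; apply: (bij_inj psi_bij).
by rewrite psiD' psiD // inE pF orbT.
Qed.

(* A subset S of T is nowhere dense as soon as every copy of Q in T has a
   basic neighbourhood disjoint from S: every nonempty open subset of T
   contains such a copy by density, hence a smaller open set missing S. *)
Lemma nowhere_dense_of_avoided_near_Q (S : Op -> Prop) :
  (forall (G' : Op) (phi : nat -> rat), bijective phi -> phi 0%N = 0 ->
     (forall a b, phi (G' (a, b)) = phi a + phi b) ->
     exists L : seq (nat * nat), forall H, {in L, H =1 G'} -> ~ S H) ->
  nowhere_dense_in in_T (fun y => in_T y /\ S y).
Proof.
move=> avoided G0 [TG0 [U [U_open UG0 U_cl]]].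
have [F F_nbhd] := U_open G0 UG0.
have [G' [TG' [phi [phi_bij phiD]] G'F]] := rational_structures_dense F TG0.
have phi0 : phi 0%N = 0 by apply: (hom_zero phiD); have [[_ _ id0 _] _] := TG'.
have [L L_avoids] := avoided G' phi phi_bij phi0 phiD.
have [_ G'_cl] := U_cl G' (F_nbhd G' G'F) TG'.
pose W H := {in L, H =1 G'}.
have W_open : is_open W.
  by move=> f Wf; exists L => g gf i iL; rewrite gf ?Wf.
have [H [WH _ [_ SH]]] := G'_cl W W_open (fun i _ => erefl).
exact: L_avoids WH SH.
Qed.

(* The pairs (x, k x) for k < n witness the value of the multiple n x. *)
Fixpoint multiple_graph (G : Op) n x : seq (nat * nat) :=
  if n is k.+1 then (x, gmul G k x) :: multiple_graph G k x else [::].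

Lemma gmul_local (G H : Op) n x :
  {in multiple_graph G n x, H =1 G} -> gmul H n x = gmul G n x.
Proof.
elim: n => [|n IHn] //= HG; rewrite IHn ?HG ?mem_head // => i iL.
by apply: HG; rewrite inE iL orbT.
Qed.

Definition not_divisible (x n : nat) (G : Op) : Prop :=
  (0 < n)%N /\ forall y, gmul G n y <> x.

Definition independent_of_one (x : nat) (G : Op) : Prop :=
  forall a b, (0 < a)%N ->
    gmul G a x <> gmul G b 1%N /\ G (gmul G a x, gmul G b 1%N) <> 0%N.

Lemma not_divisible_nowhere_dense x n :
  nowhere_dense_in in_T (fun y => in_T y /\ not_divisible x n y).
Proof.
apply: nowhere_dense_of_avoided_near_Q => G' phi phi_bij phi0 phiD.
have [n0 | n_gt0] := posnP n; first by exists [::] => H _ []; rewrite n0.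
have [y yx] := rational_divisible phiD phi0 phi_bij x n_gt0.
exists (multiple_graph G' n y) => H HG' [_ /(_ y)]; apply.
by rewrite (gmul_local HG').
Qed.

Lemma independent_nowhere_dense x :
  nowhere_dense_in in_T (fun y => in_T y /\ independent_of_one x y).
Proof.
apply: nowhere_dense_of_avoided_near_Q => G' phi phi_bij phi0 phiD.
have [a [b [a_gt0 ab_rel]]] := rational_rank_one phiD phi0 phi_bij x.
pose ax := gmul G' a x; pose b1 := gmul G' b 1%N.
exists (multiple_graph G' a x ++ multiple_graph G' b 1%N ++ [:: (ax, b1)]) => H HG'.
have H_ax : gmul H a x = ax.
  by apply: gmul_local => i iL; apply: HG'; rewrite mem_cat iL.
have H_b1 : gmul H b 1%N = b1.
  by apply: gmul_local => i iL; apply: HG'; rewrite !mem_cat iL orbT.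
have H_sum : H (ax, b1) = G' (ax, b1) by apply: HG'; rewrite !mem_cat mem_head !orbT.
move/(_ a b a_gt0); rewrite H_ax H_b1 H_sum => -[].
by case: ab_rel.
Qed.

Definition bad (k : nat) (G : Op) : Prop :=
  match unpickle k : option ((nat * nat) + nat) with
  | Some (inl (x, n)) => not_divisible x n G
  | Some (inr x) => independent_of_one x G
  | None => False
  end.

Lemma bad_nowhere_dense k : nowhere_dense_in in_T (fun y => in_T y /\ bad k y).
Proof.
rewrite /bad; case: (unpickle k) => [[[x n] | x] |].
- exact: not_divisible_nowhere_dense.
- exact: independent_nowhere_dense.
- by apply: nowhere_dense_of_avoided_near_Q => G' phi _ _ _; exists [::] => H _ [].
Qed.

(* A point of T lying in no bad set is divisible and of rank one (relative
   to the element 1 of nat, which is nonzero), hence isomorphic to Q. *)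
Lemma good_iso_to_Q (g : tfgroup) : (forall k, ~ bad k (op g)) -> iso_to_Q (op g).
Proof.
move=> good; pose one : carrier g := 1%N.
have divisible (x : carrier g) n : (0 < n)%N -> exists y : carrier g, y *+ n = x.
  move=> n_gt0; apply: NNPP => no_root.
  apply: (good (pickle (inl (x, n) : (nat * nat) + nat))); rewrite /bad pickleK.
  by split => // y yx; apply: no_root; exists y; rewrite -gmulE.
have rank_one (x : carrier g) : exists a (b : int), (0 < a)%N /\ x *+ a = one *~ b.
  apply: NNPP => indep; apply: (good (pickle (inr x : (nat * nat) + nat))).
  rewrite /bad pickleK => a b a_gt0; split => ab_rel; apply: indep; exists a.
    by exists (Posz b); rewrite -pmulrn -!gmulE.
  exists (- Posz b); split => //; apply/eqP.
  by rewrite mulrNz -pmulrn -addr_eq0 -!gmulE; apply/eqP.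
have [phi [phi_bij phiD]] :=
  rank_one_divisible_iso (@carrier_torsion_free g) (e := one) isT divisible rank_one.
by exists phi.
Qed.

Theorem theorem4p4 : comeager_in in_T iso_to_Q.
Proof.
exists bad; split; first exact: bad_nowhere_dense.
move=> G TG not_iso; apply: NNPP => good; apply: not_iso.
by apply: (good_iso_to_Q (g := TFGroup TG)) => k bad_k; apply: good; exists k.
Qed.
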